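(* In the setting described in the context, let $\gamma_1,\ldots,\gamma_K>0$ and consider $$\mathbf{P3}:\quad \min_{\mathbf{p}_1,\ldots,\mathbf{p}_K\in\mathbb{C}^{M_t}}\sum_{k=1}^K\mathbf{p}_k^H\mathbf{p}_k\quad\text{s.t.}\quad \mathcal{C}_k\le 0,\ k=1,\ldots,K,$$ where $\mathcal{C}_k=1+\frac{1}{\sigma_n^2}\sum_{i\neq k}\mathbf{p}_i^H\mathbf{R}_k\mathbf{p}_i-\frac{1}{\sigma_n^2\gamma_k}\mathbf{p}_k^H\mathbf{R}_k\mathbf{p}_k$. Let $(\mathbf{p}_1,\ldots,\mathbf{p}_K)$ be an optimal solution of $\mathbf{P3}$ with optimal Lagrange multipliers $\mu_1,\ldots,\mu_K\ge0$, i.e. together they satisfy the KKT conditions $\mathbf{p}_k+\sum_{i\neq k}\frac{\mu_i}{\sigma_n^2}\mathbf{R}_i\mathbf{p}_k-\frac{\mu_k}{\sigma_n^2\gamma_k}\mathbf{R}_k\mathbf{p}_k=\mathbf{0}$ and $\mu_k\mathcal{C}_k=0$ for all $k$. Write $\mathbf{p}_k=\sqrt{\rho_k}\,\underline{\mathbf{p}}_k$ with $\rho_k\ge0$ and $\underline{\mathbf{p}}_k^H\underline{\mathbf{p}}_k=1$, and set $\mathbf{S}_k=\mu_k\mathbf{R}_k$ and $\mathbf{N}_k=\sigma_n^2\mathbf{I}+\sum_{i\neq k}\mu_i\mathbf{R}_i$. Then for each $k$, $\underline{\mathbf{p}}_k$ is a generalized eigenvector of the matrix pair $(\mathbf{S}_k,\mathbf{N}_k)$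 associated with its maximum generalized eigenvalue, and $\gamma_k$ equals this maximum generalized eigenvalue.
   Context: A base station with $M_t$ antennas serves $K$ single-antenna users; $\sigma_n^2>0$ is the noise variance. For each user $k$, $\mathbf{R}_k=\mathbb{E}\{\mathbf{h}_k\mathbf{h}_k^H\}=\beta_k^2\bar{\mathbf{h}}_k\bar{\mathbf{h}}_k^H+(1-\beta_k^2)\mathbf{V}\boldsymbol{\Lambda}_k\mathbf{V}^H\in\mathbb{C}^{M_t\times M_t}$, where $\bar{\mathbf{h}}_k\in\mathbb{C}^{M_t}$, $\beta_k\in[0,1]$, $\mathbf{V}\in\mathbb{C}^{M_t\times NM_t}$ is a fixed matrix (a Kronecker product of oversampled DFT matrices), and $\boldsymbol{\Lambda}_k$ is an $NM_t\times NM_t$ diagonal matrix with nonnegative diagonal entries; this is the covariance of the channel $\mathbf{h}_k=\beta_k\bar{\mathbf{h}}_k+\sqrt{1-\beta_k^2}\mathbf{V}(\mathbf{m}_k\odot\mathbf{w}_k)$ with $\mathbf{w}_k$ i.i.d. $\mathcal{CN}(0,1)$ entries and $\boldsymbol{\Lambda}_k=\mathrm{diag}(\mathbf{m}_k\odot\mathbf{m}_k)$. A generalized eigenvalue $\lambda$ of a pair $(\mathbf{S},\mathbf{N})$ with eigenvector $\mathbf{x}\neq\mathbf{0}$ satisfies $\mathbf{S}\mathbf{x}=\lambda\mathbf{N}\mathbf{x}$. *)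

From HB Require Import structures.
From mathcomp Require Import all_boot all_order all_algebra.
From mathcomp Require Import complex.
From mathcomp Require Import reals.
Set Implicit Arguments. Unset Strict Implicit. Unset Printing Implicit Defensive.
Import Order.TTheory GRing.Theory Num.Theory.
Local Open Scope ring_scope.

Definition herm (R : realType) (m n : nat) (A : 'M[R[i]]_(m, n)) : 'M[R[i]]_(n, m) :=
  (map_mx Num.conj A)^T.

Definition qform (R : realType) (n : nat) (x : 'cV[R[i]]_n) (A : 'M[R[i]]_n)
  (y : 'cV[R[i]]_n) : R[i] := (herm x *m A *m y) 0 0.

Definition dotH (R : realType) (n : nat) (x y : 'cV[R[i]]_n) : R[i] :=
  (herm x *m y) 0 0.

Definition covR (R : realType) (Mt NMt : nat) (beta : R) (hbar : 'cV[R[i]]_Mt)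
  (V : 'M[R[i]]_(Mt, NMt)) (lam : 'rV[R]_NMt) : 'M[R[i]]_Mt :=
  ((beta ^+ 2)%:C)%C *: (hbar *m herm hbar)
  + ((1 - beta ^+ 2)%:C)%C *: (V *m diag_mx (map_mx (fun r => (r%:C)%C) lam) *m herm V).

Definition gen_eigvec (F : fieldType) (n : nat) (S N : 'M[F]_n) (lambda : F)
  (x : 'cV[F]_n) : Prop :=
  x != 0 /\ S *m x = lambda *: (N *m x).

Definition gen_eigval (F : fieldType) (n : nat) (S N : 'M[F]_n) (lambda : F) : Prop :=
  exists x, gen_eigvec S N lambda x.

Definition max_gen_eigval (R : realType) (n : nat) (S N : 'M[R[i]]_n) (lambda : R[i]) : Prop :=
  gen_eigval S N lambda /\ forall l, gen_eigval S N l -> l <= lambda.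

Definition Ck (R : realType) (Mt K : nat) (sigma2 : R) (gamma : 'I_K -> R)
  (Rk : 'I_K -> 'M[R[i]]_Mt) (p : 'I_K -> 'cV[R[i]]_Mt) (k : 'I_K) : R[i] :=
  1 + ((sigma2^-1)%:C)%C * (\sum_(i < K | i != k) qform (p i) (Rk k) (p i))
    - (((sigma2 * gamma k)^-1)%:C)%C * qform (p k) (Rk k) (p k).

Definition P3_feasible (R : realType) (Mt K : nat) (sigma2 : R) (gamma : 'I_K -> R)
  (Rk : 'I_K -> 'M[R[i]]_Mt) (p : 'I_K -> 'cV[R[i]]_Mt) : Prop :=
  forall k, Ck sigma2 gamma Rk p k <= 0.

Definition P3_optimal (R : realType) (Mt K : nat) (sigma2 : R) (gamma : 'I_K -> R)
  (Rk : 'I_K -> 'M[R[i]]_Mt) (p : 'I_K -> 'cV[R[i]]_Mt) : Prop :=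
  P3_feasible sigma2 gamma Rk p /\
  forall q, P3_feasible sigma2 gamma Rk q ->
    \sum_(k < K) dotH (p k) (p k) <= \sum_(k < K) dotH (q k) (q k).

(* Set B_k := I + sum_(i != k) (mu_i / sigma^2) R_i - mu_k / (sigma^2 gamma_k) R_k.
   Stationarity says B_k p_k = 0, and sigma^2 B_k = N_k - S_k / gamma_k.  Once B_k
   is known to be positive semidefinite, a generalized eigenpair S_k y = l N_k y gives
   0 <= y^H (N_k - S_k / gamma_k) y = (1 - l / gamma_k) y^H N_k y with y^H N_k y > 0,
   so l <= gamma_k, while p_k attains gamma_k.

   Positive semidefiniteness of B_k comes from optimality.  The Lagrangian identity
   sum_j |q_j|^2 + sum_j mu_j C_j(q) = sum_j mu_j + sum_j q_j^H B_j q_j shows that the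
   optimal value is sum_j mu_j, and that a point q where every constraint is tight
   costs sum_j mu_j + sum_j q_j^H B_j q_j.  Replace the k-th direction by p_k + e x and
   rescale the powers: for fixed directions the constraints are affine in the powers,
   through a Z-matrix whose row sums are >= 1 at e = 0, hence positive for small e > 0,
   so positive powers s making every constraint tight exist.  As B_j p_j = 0, this
   point costs s_k e^2 x^H B_k x more than the optimum, which forces x^H B_k x >= 0. *)

From mathcomp Require Import all_boot all_order all_algebra.
From mathcomp Require Import complex reals.
From mathcomp Require Import ring lra.
Set Implicit Arguments.
Unset Strict Implicit.
Unset Printing Implicit Defensive.

Import Order.TTheory GRing.Theory Num.Theory.
Local Open Scope ring_scope.

Section ConjugateTranspose.
Variable R : realType.
Local Notation C := R[i].
Local Notation "x %:C" := (real_complex R x).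

Lemma conjC_real (r : R) : (r%:C)^* = r%:C.
Proof. exact: conjc_real. Qed.

Lemma hermD m n (A B : 'M[C]_(m, n)) : herm (A + B) = herm A + herm B.
Proof. by apply/matrixP=> i j; rewrite !mxE rmorphD. Qed.

Lemma hermB m n (A B : 'M[C]_(m, n)) : herm (A - B) = herm A - herm B.
Proof. by apply/matrixP=> i j; rewrite !mxE rmorphB. Qed.

Lemma herm_sum m n (I : finType) (P : pred I) (F : I -> 'M[C]_(m, n)) :
  herm (\sum_(i | P i) F i) = \sum_(i | P i) herm (F i).
Proof.
elim/big_rec2: _ => [|i B A _ <-]; last by rewrite hermD.
by apply/matrixP=> i j; rewrite !mxE conjC0.
Qed.

Lemma hermM m n l (A : 'M[C]_(m, n)) (B : 'M[C]_(n, l)) :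
  herm (A *m B) = herm B *m herm A.
Proof. by rewrite /herm map_mxM trmx_mul. Qed.

Lemma hermK m n (A : 'M[C]_(m, n)) : herm (herm A) = A.
Proof. by apply/matrixP=> i j; rewrite !mxE conjCK. Qed.

Lemma hermZ m n a (A : 'M[C]_(m, n)) : herm (a *: A) = a^* *: herm A.
Proof. by apply/matrixP=> i j; rewrite !mxE rmorphM. Qed.

Lemma herm_scalar_mx n (a : C) : herm (a%:M : 'M_n) = (a^*)%:M.
Proof. by apply/matrixP=> i j; rewrite !mxE eq_sym rmorphMn. Qed.

Lemma herm_diag_real n (d : 'rV[R]_n) :
  herm (diag_mx (map_mx (fun r => r%:C) d)) = diag_mx (map_mx (fun r => r%:C) d).
Proof.
apply/matrixP=> i j; rewrite !mxE /= rmorphMn eq_sym.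
by case: eqP => [->|_]; rewrite ?mulr0n // !mulr1n; apply: conjC_real.
Qed.

Lemma qformDm n (x y : 'cV[C]_n) A B :
  qform x (A + B) y = qform x A y + qform x B y.
Proof. by rewrite /qform mulmxDr mulmxDl mxE. Qed.

Lemma qformZm n (x y : 'cV[C]_n) a A : qform x (a *: A) y = a * qform x A y.
Proof. by rewrite /qform -scalemxAr -scalemxAl mxE. Qed.

Lemma qformBm n (x y : 'cV[C]_n) A B :
  qform x (A - B) y = qform x A y - qform x B y.
Proof. by rewrite qformDm -scaleN1r qformZm mulN1r. Qed.

Lemma qform_summ n (x y : 'cV[C]_n) (I : finType) (P : pred I) F :
  qform x (\sum_(i | P i) F i) y = \sum_(i | P i) qform x (F i) y.
Proof.
elim/big_rec2: _ => [|i s B _ <-]; last by rewrite qformDm.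
by rewrite /qform mulmx0 mul0mx mxE.
Qed.

Lemma qform0l n (A : 'M[C]_n) y : qform 0 A y = 0.
Proof.
rewrite /qform (_ : herm 0 = 0) ?mul0mx ?mxE //.
by apply/matrixP=> i j; rewrite !mxE conjC0.
Qed.

Lemma qform_scalar_mx n (x : 'cV[C]_n) a : qform x a%:M x = a * dotH x x.
Proof. by rewrite -scalemx1 qformZm /qform mulmx1. Qed.

Lemma qformZv n (x y : 'cV[C]_n) a b A :
  qform (a *: x) A (b *: y) = a^* * b * qform x A y.
Proof. by rewrite /qform hermZ -!scalemxAl -scalemxAr !mxE mulrA. Qed.

Lemma qform_sqrt_scale n (x : 'cV[C]_n) A (r : R) : 0 <= r ->
  qform ((Num.sqrt r)%:C *: x) A ((Num.sqrt r)%:C *: x) = r%:C * qform x A x.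
Proof. by move=> r_ge0; rewrite qformZv conjC_real -rmorphM -expr2 sqr_sqrtr. Qed.

Lemma qform_shift n (u x : 'cV[C]_n) A (e : R) :
  qform (u + e%:C *: x) A (u + e%:C *: x) =
  qform u A u + e%:C * (qform u A x + qform x A u) + (e ^+ 2)%:C * qform x A x.
Proof.
rewrite /qform hermD hermZ conjC_real !mulmxDl !mulmxDr.
rewrite -!scalemxAl -!scalemxAr ![((_ + _)%R : 'M_1) 0 0]mxE ![((_ *: _) : 'M_1) 0 0]mxE.
by rewrite rmorphXn expr2 mulrDr !mulrA !addrA.
Qed.

Lemma Re_realM (r : R) (z : C) : complex.Re (r%:C * z) = r * complex.Re z.
Proof. by case: z => a b /=; rewrite mul0r subr0. Qed.

Lemma qform_conj n (x y : 'cV[C]_n) A :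
  herm A = A -> (qform x A y)^* = qform y A x.
Proof.
have herm11 (M : 'M[C]_1) : herm M 0 0 = (M 0 0)^* by rewrite !mxE.
by move=> A_herm; rewrite /qform -herm11 !hermM hermK A_herm mulmxA.
Qed.

Lemma dotH_gt0 n (x : 'cV[C]_n) : x != 0 -> 0 < dotH x x.
Proof.
move=> x_neq0; have term_ge0 i : 0 <= (x i 0)^* * x i 0 by rewrite mulrC mul_conjC_ge0.
have -> : dotH x x = \sum_i (x i 0)^* * x i 0.
  by rewrite /dotH mxE; apply: eq_bigr => i _; rewrite !mxE.
rewrite lt_def sumr_ge0 // andbT psumr_eq0 //; apply: contra x_neq0 => /allP x0.
apply/eqP/matrixP => i j; rewrite (ord1 j) mxE.
by move: (x0 i (mem_index_enum _)); rewrite /= mulrC mul_conjC_eq0 => /eqP.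
Qed.

Lemma qform_gram_ge0 m n (x : 'cV[C]_n) (A : 'M[C]_(n, m)) :
  0 <= qform x (A *m herm A) x.
Proof.
rewrite /qform -{2}[x]hermK !mulmxA -mulmxA -hermM mxE.
by apply: sumr_ge0 => i _; rewrite !mxE mul_conjC_ge0.
Qed.

End ConjugateTranspose.

Section Covariance.
Variable R : realType.
Local Notation "x %:C" := (real_complex R x).

Lemma covR_herm Mt NMt beta hbar V lam :
  herm (@covR R Mt NMt beta hbar V lam) = covR beta hbar V lam.
Proof.
by rewrite /covR hermD !hermZ !conjC_real !hermM !hermK herm_diag_real mulmxA.
Qed.

Lemma covR_psd Mt NMt (beta : R) hbar V (lam : 'rV[R]_NMt) (x : 'cV_Mt) :
  0 <= beta <= 1 -> (forall j, 0 <= lam 0 j) ->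
  0 <= qform x (covR beta hbar V lam) x.
Proof.
move=> /andP[beta_ge0 beta_le1] lam_ge0.
rewrite /covR; set D := diag_mx (map_mx (fun r => r%:C) (map_mx Num.sqrt lam)).
have -> : V *m diag_mx (map_mx (fun r => r%:C) lam) *m herm V = (V *m D) *m herm (V *m D).
  rewrite hermM herm_diag_real mulmxA -[V *m D *m D]mulmxA mulmx_diag; congr (_ *m _ *m _).
  by apply/matrixP => i j; rewrite !mxE -rmorphM -expr2 sqr_sqrtr.
rewrite qformDm !qformZm; apply: addr_ge0; apply: mulr_ge0; rewrite ?qform_gram_ge0 // ler0c.
  exact: exprn_ge0.
by rewrite subr_ge0 expr_le1.
Qed.

End Covariance.

Section ZMatrix.
Variables (F : realFieldType) (n : nat) (W : 'M[F]_n).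
Hypothesis offdiag_le0 : forall i j, i != j -> W i j <= 0.
Hypothesis rowsum_gt0 : forall i, 0 < \sum_j W i j.

Lemma Zmx_lower_bound (v : 'cV[F]_n) i :
  exists m, (W *m v) m 0 / \sum_j W m j <= v i 0.
Proof.
have [m _ v_min] := @arg_minP _ _ _ i predT (fun j => v j 0) isT.
exists m; apply: le_trans (v_min i isT); rewrite ler_pdivrMr // mxE mulr_sumr.
apply: ler_sum => j _; rewrite [v m 0 * _]mulrC.
by have [<-|/offdiag_le0 Wmj_le0] := eqVneq m j; last exact: ler_wnM2l (v_min j isT).
Qed.

Lemma Zmx_ge0 (v : 'cV[F]_n) : (forall i, 0 <= (W *m v) i 0) -> forall i, 0 <= v i 0.
Proof.
move=> Wv_ge0 i; have [m] := Zmx_lower_bound v i; apply: le_trans.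
exact: divr_ge0 (Wv_ge0 m) (ltW (rowsum_gt0 m)).
Qed.

Lemma Zmx_gt0 (v : 'cV[F]_n) : (forall i, 0 < (W *m v) i 0) -> forall i, 0 < v i 0.
Proof.
move=> Wv_gt0 i; have [m] := Zmx_lower_bound v i; apply: lt_le_trans.
exact: divr_gt0 (Wv_gt0 m) (rowsum_gt0 m).
Qed.

Lemma Zmx_unit : W \in unitmx.
Proof.
rewrite unitmxE unitfE -det_tr; apply/negP => /det0P[v v_neq0 vW0].
have Wv0 : W *m v^T = 0 by rewrite -[W]trmxK -trmx_mul vW0 trmx0.
have v_ge0 : forall j, 0 <= v^T j 0 by apply: Zmx_ge0 => k; rewrite Wv0 mxE.
have vN_ge0 : forall j, 0 <= (- v^T) j 0.
  by apply: Zmx_ge0 => k; rewrite mulmxN Wv0 oppr0 mxE.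
move/eqP: v_neq0; apply; apply/matrixP => i j; rewrite (ord1 i).
have := vN_ge0 j; have := v_ge0 j; rewrite !mxE oppr_ge0 => vj_ge0 vj_le0.
by apply/eqP; rewrite eq_le vj_le0.
Qed.

Lemma Zmx_solve (b : 'cV[F]_n) : (forall i, 0 < b i 0) ->
  exists2 s : 'cV[F]_n, W *m s = b & forall i, 0 < s i 0.
Proof.
move=> b_gt0; exists (invmx W *m b); first by rewrite mulKVmx ?Zmx_unit.
by apply: Zmx_gt0 => i; rewrite mulKVmx ?Zmx_unit.
Qed.

End ZMatrix.

Lemma exists_small_quadratic (F : realFieldType) (I : finType) (a b : I -> F) :
  exists2 e, 0 < e & forall i, `|e * a i + e ^+ 2 * b i| < 1.
Proof.
set S := \sum_i (`|a i| + `|b i|).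
have S_ge0 : 0 <= S by apply: sumr_ge0 => i _; rewrite addr_ge0.
have S1_gt0 : 0 < 1 + S by rewrite ltr_wpDr.
set e := (1 + S)^-1; have e_gt0 : 0 < e by rewrite invr_gt0.
have eS1 : e * (1 + S) = 1 by rewrite mulVf ?gt_eqF.
exists e => // i; apply: le_lt_trans (ler_normD _ _) _.
have ab_le_S : `|a i| + `|b i| <= S.
  by rewrite /S (bigD1 i) //= lerDl sumr_ge0 // => j _; rewrite addr_ge0.
have e_le1 : e <= 1 by rewrite invr_le1 ?unitfE ?gt_eqF // lerDl.
rewrite !normrM (gtr0_norm e_gt0) -mulrA -mulrDr.
apply: (@le_lt_trans _ _ (e * S)).
  by rewrite ler_pM2l // (le_trans _ ab_le_S) // lerD2l ler_piMl.
by move: eS1; rewrite mulrDr mulr1; lra.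
Qed.

Lemma gen_eigvec_of_kernel (F : fieldType) n (S N : 'M[F]_n) g x :
  g != 0 -> x != 0 -> (N - g^-1 *: S) *m x = 0 -> gen_eigvec S N g x.
Proof.
move=> g_neq0 x_neq0; rewrite mulmxBl -scalemxAl => /eqP; rewrite subr_eq0 => /eqP NxE.
by split=> //; rewrite NxE scalerA mulfV // scale1r.
Qed.

Lemma gen_eigval_le (R : realType) n (S N : 'M[R[i]]_n) (g l : R[i]) :
  0 < g -> (forall y, y != 0 -> 0 < qform y N y) ->
  (forall y, 0 <= qform y (N - g^-1 *: S) y) -> gen_eigval S N l -> l <= g.
Proof.
move=> g_gt0 N_pd gap_psd [y [y_neq0 Sy]].
have SyE : qform y S y = l * qform y N y.
  by rewrite /qform -!mulmxA Sy -scalemxAr [LHS]mxE.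
have := gap_psd y; rewrite qformBm qformZm SyE mulrA -{1}[qform y N y]mul1r -mulrBl.
by rewrite pmulr_lge0 ?N_pd // subr_ge0 mulrC ler_pdivrMr // mul1r.
Qed.

Section KKT.
Variables (R : realType) (Mt K : nat) (sigma2 : R) (gamma : 'I_K -> R)
  (Rk : 'I_K -> 'M[R[i]]_Mt) (mu : 'I_K -> R).
Local Notation C := R[i].
Local Notation "x %:C" := (real_complex R x).
Local Notation Ck := (Ck sigma2 gamma Rk).

Hypothesis sigma2_gt0 : 0 < sigma2.
Hypothesis gamma_gt0 : forall k, 0 < gamma k.
Hypothesis Rk_herm : forall k, herm (Rk k) = Rk k.
Hypothesis Rk_psd : forall k x, 0 <= qform x (Rk k) x.
Hypothesis mu_ge0 : forall k, 0 <= mu k.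

Definition kkt_mx j := 1%:M + \sum_(i < K | i != j) ((mu i / sigma2)%:C *: Rk i)
  - ((mu j / (sigma2 * gamma j))%:C *: Rk j).

Definition signal_mx k := (mu k)%:C *: Rk k.

Definition noise_mx k := (sigma2%:C)%:M + \sum_(i < K | i != k) ((mu i)%:C *: Rk i).

Lemma kkt_mxE k :
  sigma2%:C *: kkt_mx k = noise_mx k - ((gamma k)%:C)^-1 *: signal_mx k.
Proof.
have [s_neq0 g_neq0] : sigma2 != 0 /\ gamma k != 0 by rewrite !gt_eqF.
rewrite /kkt_mx /noise_mx /signal_mx scalerBr scalerDr scalemx1 scaler_sumr.
rewrite -fmorphV !scalerA -!rmorphM; congr (_ + _ - _%:C *: _); last by field; apply/andP.
by apply: eq_bigr => i _; rewrite scalerA -rmorphM; congr (_%:C *: _); field.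
Qed.

Lemma kkt_mx_herm j : herm (kkt_mx j) = kkt_mx j.
Proof.
rewrite /kkt_mx hermB hermD herm_scalar_mx conjC1 herm_sum hermZ conjC_real Rk_herm.
by congr (_ + _ - _); apply: eq_bigr => i _; rewrite hermZ conjC_real Rk_herm.
Qed.

Lemma lagrangianE (q : 'I_K -> 'cV[C]_Mt) :
  \sum_j dotH (q j) (q j) + \sum_j (mu j)%:C * Ck q j =
  \sum_j (mu j)%:C + \sum_j qform (q j) (kkt_mx j) (q j).
Proof.
set Q := fun j i => qform (q j) (Rk i) (q j).
set cross := \sum_j \sum_(i | i != j) ((mu j / sigma2)%:C * Q i j).
set own := \sum_j ((mu j / (sigma2 * gamma j))%:C * Q j j).
have slackE : \sum_j (mu j)%:C * Ck q j = \sum_j (mu j)%:C + cross - own.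
  rewrite -big_split -sumrB /=; apply: eq_bigr => j _.
  rewrite /Ck mulrBr mulrDr mulr1 !mulr_sumr !rmorphM /= !mulrA.
  by congr (_ + _ - _); apply: eq_bigr => i _; rewrite mulrA.
have formE : \sum_j qform (q j) (kkt_mx j) (q j) = \sum_j dotH (q j) (q j) + cross - own.
  rewrite /cross (exchange_big_dep xpredT) //= -big_split -sumrB /=.
  apply: eq_bigr => j _; rewrite /kkt_mx qformBm qformDm qform_scalar_mx mul1r.
  rewrite qform_summ qformZm; congr (_ + _ - _).
  by apply: eq_big => [i|i _]; [rewrite eq_sym | rewrite qformZm].
by rewrite slackE formE !addrA [X in X + _ - _ = _]addrC.
Qed.

Definition coupling_coef j i := if i == j then (sigma2 * gamma j)^-1 else - sigma2^-1.

Definition gain (v : 'I_K -> 'cV[C]_Mt) j i := complex.Re (qform (v i) (Rk j) (v i)).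

Definition coupling_mx v : 'M[R]_K := \matrix_(j, i) (coupling_coef j i * gain v j i).

Lemma qform_Rk_real y j : qform y (Rk j) y = (complex.Re (qform y (Rk j) y))%:C.
Proof. by rewrite RRe_real ?ger0_real. Qed.

Lemma gain_ge0 v j i : 0 <= gain v j i.
Proof. by have := Rk_psd j (v i); rewrite lecE => /andP[]. Qed.

Lemma coupling_offdiag_le0 v j i : j != i -> coupling_mx v j i <= 0.
Proof.
move=> ji; rewrite mxE /coupling_coef eq_sym (negbTE ji) mulNr oppr_le0.
by rewrite mulr_ge0 ?gain_ge0 // invr_ge0 ltW.
Qed.

Lemma CkE q j : Ck q j = (1 - \sum_i coupling_mx q j i)%:C.
Proof.
rewrite (bigD1 j) //= mxE /coupling_coef eqxx.
have -> : \sum_(i | i != j) coupling_mx q j i = - (sigma2^-1 * \sum_(i | i != j) gain q j i).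
  rewrite mulr_sumr -sumrN; apply: eq_bigr => i /negbTE ij.
  by rewrite mxE /coupling_coef ij mulNr.
rewrite /Ck qform_Rk_real; under eq_bigr do rewrite qform_Rk_real.
rewrite !(rmorphB, rmorphD, rmorphN, rmorphM, rmorph1, rmorph_sum) /=.
by rewrite /gain; ring.
Qed.

Lemma coupling_rowsum_scale v (s : 'cV[R]_K) j : (forall i, 0 <= s i 0) ->
  \sum_i coupling_mx (fun i => (Num.sqrt (s i 0))%:C *: v i) j i = (coupling_mx v *m s) j 0.
Proof.
move=> s_ge0; rewrite mxE; apply: eq_bigr => i _.
by rewrite !mxE /gain qform_sqrt_scale // Re_realM mulrA mulrAC.
Qed.

Lemma noise_mx_pd k y : y != 0 -> 0 < qform y (noise_mx k) y.
Proof.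
move=> y_neq0; rewrite qformDm qform_scalar_mx qform_summ.
apply: ltr_wpDr; last by rewrite mulr_gt0 ?dotH_gt0 ?ltcR.
by apply: sumr_ge0 => i _; rewrite qformZm mulr_ge0 ?ler0c.
Qed.

Variable p : 'I_K -> 'cV[C]_Mt.
Hypothesis p_opt : P3_optimal sigma2 gamma Rk p.
Hypothesis stationary : forall k,
  p k + \sum_(i < K | i != k) ((mu i / sigma2)%:C *: (Rk i *m p k))
  - ((mu k / (sigma2 * gamma k))%:C *: (Rk k *m p k)) = 0.
Hypothesis slackness : forall k, (mu k)%:C * Ck p k = 0.

Lemma kkt_mx_annihilates j : kkt_mx j *m p j = 0.
Proof.
rewrite /kkt_mx mulmxBl mulmxDl mul1mx mulmx_suml -scalemxAl; apply: etrans (stationary j).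
by congr (_ + _ - _); apply: eq_bigr => i _; rewrite scalemxAl.
Qed.

Lemma qform_kkt_mx_r y j : qform y (kkt_mx j) (p j) = 0.
Proof. by rewrite /qform -mulmxA kkt_mx_annihilates mulmx0 mxE. Qed.

Lemma qform_kkt_mx_l y j : qform (p j) (kkt_mx j) y = 0.
Proof. by rewrite -qform_conj ?kkt_mx_herm // qform_kkt_mx_r conjC0. Qed.

Lemma optimal_value : \sum_j dotH (p j) (p j) = \sum_j (mu j)%:C.
Proof.
have slack0 : \sum_j (mu j)%:C * Ck p j = 0 by apply: big1 => j _.
have form0 : \sum_j qform (p j) (kkt_mx j) (p j) = 0.
  by apply: big1 => j _; exact: qform_kkt_mx_r.
by have := lagrangianE p; rewrite slack0 form0 !addr0.
Qed.

Lemma coupling_rowsum_ge1 j : 1 <= \sum_i coupling_mx p j i.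
Proof. by have := p_opt.1 j; rewrite CkE -(rmorph0 (real_complex R)) lecR subr_le0. Qed.

Lemma optimal_p_neq0 k : p k != 0.
Proof.
apply/eqP => pk0; suff Ck_gt0 : 0 < Ck p k.
  by have := lt_le_trans Ck_gt0 (p_opt.1 k); rewrite ltxx.
rewrite /Ck pk0 qform0l mulr0 subr0; apply: ltr_wpDr ltr01.
by rewrite mulr_ge0 ?sumr_ge0 // ler0c invr_ge0 ltW.
Qed.

Section Perturbation.
Variables (k : 'I_K) (x : 'cV[C]_Mt).

Definition perturb (e : R) i := if i == k then p k + e%:C *: x else p i.

Lemma rowsum_perturb : exists a b : 'I_K -> R, forall e j,
  \sum_i coupling_mx (perturb e) j i = \sum_i coupling_mx p j i + e * a j + e ^+ 2 * b j.
Proof.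
exists (fun j => coupling_coef j k * complex.Re (qform (p k) (Rk j) x + qform x (Rk j) (p k))).
exists (fun j => coupling_coef j k * complex.Re (qform x (Rk j) x)) => e j.
rewrite (bigD1 k) //= [X in _ = X + _ + _](bigD1 k) //=.
have -> : \sum_(i | i != k) coupling_mx (perturb e) j i = \sum_(i | i != k) coupling_mx p j i.
  by apply: eq_bigr => i /negbTE ik; rewrite !mxE /gain /perturb ik.
rewrite !mxE /gain /perturb eqxx qform_shift [in LHS]raddfD [in LHS]raddfD /= !Re_realM.
move: (coupling_coef j k) (complex.Re (qform (p k) (Rk j) (p k))).
move: (complex.Re (qform (p k) (Rk j) x + qform x (Rk j) (p k))).
move: (complex.Re (qform x (Rk j) x)) (\sum_(i | i != k) coupling_mx p j i).
by move=> S D B c A; ring.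
Qed.

Lemma exists_tight_perturbation : exists2 e, 0 < e &
  exists2 s : 'cV[R]_K, coupling_mx (perturb e) *m s = const_mx 1 & forall i, 0 < s i 0.
Proof.
have [a [b rowsumE]] := rowsum_perturb.
have [e e_gt0 small] := exists_small_quadratic a b.
exists e => //; apply: Zmx_solve => [j i /coupling_offdiag_le0 // | j | i]; last by rewrite mxE.
rewrite rowsumE -addrA; have := ltrNnormlW (small j); have := coupling_rowsum_ge1 j.
lra.
Qed.

Lemma kkt_form_perturb e (s : 'cV[R]_K) : (forall i, 0 <= s i 0) ->
  \sum_j qform ((Num.sqrt (s j 0))%:C *: perturb e j) (kkt_mx j)
               ((Num.sqrt (s j 0))%:C *: perturb e j)
  = (s k 0 * e ^+ 2)%:C * qform x (kkt_mx k) x.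
Proof.
move=> s_ge0; rewrite (bigD1 k) //= big1 ?addr0 => [|j /negbTE jk]; last first.
  by rewrite qform_sqrt_scale // /perturb jk qform_kkt_mx_r mulr0.
rewrite qform_sqrt_scale // /perturb eqxx qform_shift.
rewrite qform_kkt_mx_r qform_kkt_mx_l qform_kkt_mx_r.
by rewrite !(addr0, add0r, mulr0) mulrA -rmorphM.
Qed.

Lemma kkt_mx_psd : 0 <= qform x (kkt_mx k) x.
Proof.
have [e e_gt0 [s tight s_gt0]] := exists_tight_perturbation.
have s_ge0 i : 0 <= s i 0 by exact: ltW.
set q := fun i => (Num.sqrt (s i 0))%:C *: perturb e i.
have q_tight j : Ck q j = 0 by rewrite CkE coupling_rowsum_scale // tight mxE subrr.
have q_feasible : P3_feasible sigma2 gamma Rk q by move=> j; rewrite q_tight.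
have objE : \sum_j dotH (q j) (q j) =
    \sum_j (mu j)%:C + (s k 0 * e ^+ 2)%:C * qform x (kkt_mx k) x.
  rewrite -kkt_form_perturb // -lagrangianE [X in _ = _ + X]big1 ?addr0 // => j _.
  by rewrite q_tight mulr0.
have := p_opt.2 q q_feasible; rewrite optimal_value objE lerDl pmulr_rge0 // ltcR.
by rewrite mulr_gt0 ?exprn_gt0.
Qed.

End Perturbation.

Lemma kkt_gap_psd k y :
  0 <= qform y (noise_mx k - ((gamma k)%:C)^-1 *: signal_mx k) y.
Proof. by rewrite -kkt_mxE qformZm mulr_ge0 ?kkt_mx_psd // ler0c ltW. Qed.

End KKT.

Theorem theorem1 (R : realType) (Mt K N : nat) (sigma2 : R)
  (hbar : 'I_K -> 'cV[R[i]]_Mt) (beta : 'I_K -> R)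
  (V : 'M[R[i]]_(Mt, N * Mt)) (lam : 'I_K -> 'rV[R]_(N * Mt))
  (gamma : 'I_K -> R) (p : 'I_K -> 'cV[R[i]]_Mt) (mu : 'I_K -> R)
  (rho : 'I_K -> R) (pbar : 'I_K -> 'cV[R[i]]_Mt) :
  0 < sigma2 ->
  (forall k, 0 <= beta k <= 1) ->
  (forall k j, 0 <= lam k 0 j) ->
  (forall k, 0 < gamma k) ->
  let Rk := fun k => covR (beta k) (hbar k) V (lam k) in
  P3_optimal sigma2 gamma Rk p ->
  (forall k, 0 <= mu k) ->
  (forall k, p k + \sum_(i < K | i != k) (((mu i / sigma2)%:C)%C *: (Rk i *m p k))
               - (((mu k / (sigma2 * gamma k))%:C)%C *: (Rk k *m p k)) = 0) ->
  (forall k, ((mu k)%:C)%C * Ck sigma2 gamma Rk p k = 0) ->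
  (forall k, 0 <= rho k) ->
  (forall k, dotH (pbar k) (pbar k) = 1) ->
  (forall k, p k = ((Num.sqrt (rho k))%:C)%C *: pbar k) ->
  forall k : 'I_K,
    let Sk := ((mu k)%:C)%C *: Rk k in
    let Nk := (sigma2%:C)%C%:M + \sum_(i < K | i != k) (((mu i)%:C)%C *: Rk i) in
    exists lmax : R[i],
      max_gen_eigval Sk Nk lmax /\ gen_eigvec Sk Nk lmax (pbar k) /\
      lmax = ((gamma k)%:C)%C.
Proof.
move=> sigma2_gt0 beta01 lam_ge0 gamma_gt0 Rk p_opt mu_ge0 stationary slackness
  _ pbar_unit pE k Sk Nk.
have Rk_herm j : herm (Rk j) = Rk j by exact: covR_herm.
have Rk_psd j y : 0 <= qform y (Rk j) y by exact: covR_psd.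
have pbar_neq0 : pbar k != 0.
  apply/eqP => pbar0; move: (pbar_unit k).
  by rewrite pbar0 /dotH mulmx0 mxE => /eqP; rewrite eq_sym oner_eq0.
have sqrt_rho_neq0 : ((Num.sqrt (rho k))%:C)%C != 0.
  apply: contraNneq (optimal_p_neq0 sigma2_gt0 Rk_psd p_opt k) => rho0.
  by rewrite pE rho0 scale0r.
have gamma_gt0C : 0 < ((gamma k)%:C)%C by rewrite ltcR.
have kernel : (Nk - ((gamma k)%:C)%C^-1 *: Sk) *m pbar k = 0.
  apply: (scalerI sqrt_rho_neq0); rewrite scaler0 scalemxAr -pE /Nk /Sk.
  rewrite -(kkt_mxE Rk mu sigma2_gt0 gamma_gt0) -scalemxAl.
  by rewrite (kkt_mx_annihilates stationary) scaler0.
have eigvec := gen_eigvec_of_kernel (lt0r_neq0 gamma_gt0C) pbar_neq0 kernel.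
exists ((gamma k)%:C)%C; split=> //; split; first by exists (pbar k).
move=> l; apply: gen_eigval_le => // y; first exact: noise_mx_pd.
exact: (kkt_gap_psd sigma2_gt0 gamma_gt0 Rk_herm Rk_psd p_opt stationary slackness).
Qed.
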